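(* Let $p$ be a prime, $K$ a finite extension of $\mathbf Q_p$, and let $\nu$ be the valuation on $\mathbf C_p$ normalized by $\nu(p)=1$, $|\cdot|$ the corresponding absolute value. Let $$f(t,x)=x^n+c_{n-1}(t)x^{n-1}+\cdots+c_1(t)x+c_0(t),\qquad c_i(t)\in\mathcal O_K[[t]],$$ and consider the map $\pi$ from the locus $\{(t,x): |t|<1,\ |x|<1,\ f(t,x)=0\}$ to the open unit $t$-disk, $(t,x)\mapsto t$. Assume that $x=0$ is a simple root of $f(0,x)$ (the point $b$), let $D_{vert}$ denote the nonempty set of the remaining roots of $f(0,x)$ in the open unit disk $\{|x|<1\}$, let $e$ be the number of roots of $f(0,x)$ with $|x|<1$ counted with multiplicity (so $e=1+\#D_{vert}$ when these roots are simple), and let $v_{vert}:=\max_{x'\in D_{vert}}\nu(x')$. Then for every $t'\in\mathbf C_p$ with $|t'|<|p^{e\cdot v_{vert}}|$ there is exactly one $x'\in\mathbf C_p$ with $|x'|<|p^{v_{vert}}|$ and $f(t',x')=0$.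
   Context: This is the local description of the map from a formal neighbourhood of a point $b$ on a (smooth at $b_p$) modular curve to the $j$-line with parameter $t=j-j_E$: $x$ is a formal parameter at $b$ with $x(b)=0$, and $D_{vert}$ is the set of other points of the formal fibre over $t=0$. $\mathbf D(r,x)$ denotes the open disk $\{|x|<r\}$. *)

From HB Require Import structures.
From mathcomp Require Import all_boot all_order all_algebra.
From mathcomp Require Import reals.
Set Implicit Arguments. Unset Strict Implicit. Unset Printing Implicit Defensive.
Import Order.TTheory GRing.Theory Num.Theory.
Local Open Scope ring_scope.

Definition is_nonarch_abs (R : realType) (C : fieldType) (absv : C -> R) : Prop :=
  [/\ forall x, 0 <= absv x,
      forall x, absv x = 0 <-> x = 0,
      forall x y, absv (x * y) = absv x * absv y &
      forall x y, absv (x + y) <= Num.max (absv x) (absv y)].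

Definition abs_complete (R : realType) (C : fieldType) (absv : C -> R) : Prop :=
  forall u : nat -> C,
    (forall eps : R, 0 < eps -> exists N, forall m k, (N <= m)%N -> (N <= k)%N ->
        absv (u m - u k) < eps) ->
    exists l, forall eps : R, 0 < eps -> exists N, forall m, (N <= m)%N ->
        absv (u m - l) < eps.

Definition algebraic_over_Q (C : fieldType) (x : C) : Prop :=
  exists q : {poly rat}, q != 0 /\ root (map_poly ratr q) x.

(* (C, absv) is (isometrically isomorphic to) C_p with |p| = p^-1, i.e. the
   valuation nu = -log_p |.| has nu(p) = 1: C is algebraically closed
   (closedFieldType), complete for the non-archimedean absolute value absv,
   |p| = 1/p (so absv restricts to the p-adic absolute value on Q, by
   Ostrowski), and the algebraic numbers are dense in C (so C is the
   completion of an algebraic closure of Q_p). *)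
Definition is_Cp (p : nat) (R : realType) (C : closedFieldType) (absv : C -> R) : Prop :=
  [/\ is_nonarch_abs absv,
      abs_complete absv,
      absv (p%:R) = (p%:R)^-1 &
      forall x (eps : R), 0 < eps -> exists y, algebraic_over_Q y /\ absv (x - y) < eps].

(* Elements of Q_p inside C: limits of rationals. *)
Definition in_Qp (R : realType) (C : fieldType) (absv : C -> R) (x : C) : Prop :=
  forall eps : R, 0 < eps -> exists q : rat, absv (x - ratr q) < eps.

Definition finite_ext_Qp (R : realType) (C : fieldType) (absv : C -> R) (K : C -> Prop) : Prop :=
  [/\ (forall x, in_Qp absv x -> K x),
      (forall x y, K x -> K y -> K (x + y) /\ K (x * y) /\ K (- x)),
      (forall x, K x -> K (x^-1)) &
      exists b : seq C, (forall y, y \in b -> K y) /\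
        forall x, K x -> exists a : nat -> C, (forall i, in_Qp absv (a i)) /\
           x = \sum_(i < size b) a i * b`_i].

Definition in_OK (R : realType) (C : fieldType) (absv : C -> R) (K : C -> Prop) (x : C) : Prop :=
  K x /\ absv x <= 1.

Definition pseries_to (R : realType) (C : fieldType) (absv : C -> R)
  (a : nat -> C) (t l : C) : Prop :=
  forall eps : R, 0 < eps -> exists N, forall m, (N <= m)%N ->
    absv (\sum_(k < m) a k * t ^+ k - l) < eps.

(* f(t, x) = x^n + sum_{i<n} c_i(t) x^i vanishes, where c_i(t) = sum_k c i k t^k. *)
Definition f_vanishes (R : realType) (C : fieldType) (absv : C -> R)
  (n : nat) (c : 'I_n -> nat -> C) (t x : C) : Prop :=
  exists s : 'I_n -> C, (forall i, pseries_to absv (c i) t (s i)) /\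
    x ^+ n + \sum_(i < n) s i * x ^+ i = 0.

Definition f_at0 (C : fieldType) (n : nat) (c : 'I_n -> nat -> C) : {poly C} :=
  'X^n + \sum_(i < n) (c i 0%N)%:P * 'X^i.

From HB Require Import structures.
From mathcomp Require Import all_boot all_order all_algebra.
From mathcomp Require Import boolp reals.
From mathcomp Require Import ring lra.
Import Order.TTheory GRing.Theory Num.Theory.
Local Open Scope ring_scope.

(* Write f(0, x) = x * prod_(z in l) (x - z).  Every z in l has |z| >= r, so on
   the disk |x| < r the map x |-> f(0, x) multiplies distances exactly by
   P = prod |z| >= r^(e-1).  Specialising t to t' moves each coefficient by at
   most |t'| < r^e <= r P, which changes differences of values by less than
   P |x - y|; hence x |-> f(t', x) still multiplies distances by P on the disk
   and has at most one zero there.  It has one: otherwise |f(t', .)| would be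
   constant on the disk, equal to |f(t', 0)| <= |t'| < r P, and a point x with
   |x|^2 = r |f(t', 0)| / P, which exists since C is algebraically closed,
   violates the ultrametric inequality. *)

Lemma bernoulli_ineq {R : realDomainType} (d : R) n : 0 <= d ->
  1 + n%:R * d <= (1 + d) ^+ n.
Proof.
move=> d0; elim: n => [|n IH]; first by rewrite mul0r addr0 expr0.
have d2 : 0 <= n%:R * d * d by rewrite !mulr_ge0.
have d1 : 0 <= 1 + d by lra.
rewrite exprSr; apply: le_trans (ler_wpM2r d1 IH).
by rewrite -natr1; nra.
Qed.

Lemma exprn_lt_eventually {R : archiRealFieldType} {q eps : R} :
  0 <= q -> q < 1 -> 0 < eps -> exists N, q ^+ N < eps.
Proof.
move=> q0 q1 e0; have [->|q_neq0] := eqVneq q 0; first by exists 1%N; rewrite expr1.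
have q_gt0 : 0 < q by rewrite lt_def q_neq0.
pose d := q^-1 - 1; have d_gt0 : 0 < d by rewrite subr_gt0 invf_gt1.
pose N := Num.bound (eps * d)^-1; exists N.
have hN : (eps * d)^-1 < N%:R by rewrite archi_boundP // invr_ge0 ltW ?mulr_gt0.
rewrite -[q]invrK exprVn invf_plt ?posrE ?exprn_gt0 ?invr_gt0 //.
have -> : q^-1 = 1 + d by rewrite /d addrC subrK.
apply: (lt_le_trans _ (bernoulli_ineq d N (ltW d_gt0))).
have : (eps * d)^-1 * d < N%:R * d by rewrite ltr_pM2r.
rewrite invfM mulfVK ?gt_eqF //; lra.
Qed.

Definition monic_of {C : nzRingType} {n} (d : 'I_n -> C) : {poly C} :=
  'X^n + \sum_(i < n) (d i)%:P * 'X^i.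

Lemma horner_monic_of {C : comNzRingType} {n} (d : 'I_n -> C) x :
  (monic_of d).[x] = x ^+ n + \sum_(i < n) d i * x ^+ i.
Proof.
rewrite hornerD hornerXn horner_sum; congr (_ + _).
by apply: eq_bigr => i _; rewrite hornerCM hornerXn.
Qed.

Lemma horner_monic_ofB {C : comNzRingType} {n} (d d0 : 'I_n -> C) x :
  (monic_of d).[x] = (monic_of d0).[x] + \sum_(i < n) (d i - d0 i) * x ^+ i.
Proof.
rewrite !horner_monic_of -addrA -big_split /=; congr (_ + _).
by apply: eq_bigr => i _; rewrite mulrBl addrC subrK.
Qed.

Lemma monic_of_monic {C : nzRingType} {n} (d : 'I_n -> C) : monic_of d \is monic.
Proof.
apply/monicP; rewrite /monic_of lead_coefDl ?lead_coefXn // size_polyXn ltnS.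
apply: leq_trans (size_sum _ _ _) _; apply/bigmax_leqP => i _.
by rewrite mul_polyC (leq_trans (size_scale_leq _ _)) // size_polyXn.
Qed.

Lemma closed_field_sqrt {C : closedFieldType} (a : C) : exists x : C, x ^+ 2 = a.
Proof.
have /closed_rootP[x /rootP] : size ('X^2 - a%:P : {poly C}) != 1%N.
  by rewrite size_XnsubC.
by rewrite !hornerE => /eqP; rewrite subr_eq0 => /eqP; exists x.
Qed.

Lemma sum_count_mem_uniq (T : eqType) (s l : seq T) : uniq s ->
  (\sum_(x <- s) count_mem x l)%N = count (mem s) l.
Proof.
move=> s_uniq; elim: l => [|z l IH] /=; first by rewrite big1.
rewrite big_split /= IH; congr (_ + _)%N.
rewrite -(count_uniq_mem z s_uniq) -sum1_count [RHS]big_mkcond /=.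
by apply: eq_bigr => x _; rewrite eq_sym; case: (x == z).
Qed.

Lemma prod_ge_expr_count {R : realFieldType} {I : eqType} (s : seq I) (F : I -> R) (r : R) :
  0 <= r <= 1 -> (forall i, i \in s -> r <= F i) ->
  r ^+ count (fun i => F i < 1) s <= \prod_(i <- s) F i.
Proof.
move=> /andP[r0 r1]; elim: s => [|i s IH] hs; first by rewrite big_nil expr0.
have hi : r <= F i by apply: hs; rewrite inE eqxx.
have {}IH : r ^+ count (fun i => F i < 1) s <= \prod_(j <- s) F j.
  by apply: IH => j js; apply: hs; rewrite inE js orbT.
have rs0 : 0 <= r ^+ count (fun i => F i < 1) s by rewrite exprn_ge0.
rewrite big_cons /=; case: ltP => [_|Fi1].
  by rewrite add1n exprS ler_pM.
by rewrite add0n -[leLHS]mul1r ler_pM.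
Qed.

Section NonArchimedean.
Context {R : realType} {C : fieldType} {absv : C -> R}.
Hypothesis hA : is_nonarch_abs absv.

Lemma absv_ge0 x : 0 <= absv x. Proof. by case: hA. Qed.
Lemma absv_eq0 x : absv x = 0 <-> x = 0. Proof. by case: hA. Qed.
Lemma absvM x y : absv (x * y) = absv x * absv y. Proof. by case: hA. Qed.
Lemma absvD x y : absv (x + y) <= Num.max (absv x) (absv y). Proof. by case: hA. Qed.
Lemma absv0 : absv 0 = 0. Proof. exact/absv_eq0. Qed.

Lemma absv_gt0 x : (0 < absv x) = (x != 0).
Proof.
have [->|x0] := eqVneq x 0; first by rewrite absv0 ltxx.
by rewrite lt_def absv_ge0 andbT; apply: contra_neq x0 => /absv_eq0.
Qed.

Lemma absv1 : absv 1 = 1.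
Proof.
have h0 : absv 1 != 0 by rewrite gt_eqF ?absv_gt0 ?oner_eq0.
by apply: (mulfI h0); rewrite mulr1 -absvM mulr1.
Qed.

Lemma absvN x : absv (- x) = absv x.
Proof.
have hN1 : absv (-1) = 1.
  have : absv (-1) * absv (-1) = 1 by rewrite -absvM mulrNN mulr1 absv1.
  have := absv_ge0 (-1); nra.
by rewrite -mulN1r absvM hN1 mul1r.
Qed.

Lemma absvB x y : absv (x - y) = absv (y - x).
Proof. by rewrite -absvN opprB. Qed.

Lemma absvX x k : absv (x ^+ k) = absv x ^+ k.
Proof. by elim: k => [|k IH]; rewrite ?absv1 // !exprS absvM IH. Qed.

Lemma absv_prod (I : Type) (s : seq I) (P : pred I) (F : I -> C) :
  absv (\prod_(i <- s | P i) F i) = \prod_(i <- s | P i) absv (F i).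
Proof. exact: (big_morph absv absvM absv1). Qed.

Lemma absvD_le x y B : absv x <= B -> absv y <= B -> absv (x + y) <= B.
Proof. by move=> hx hy; apply: le_trans (absvD x y) _; rewrite ge_max hx hy. Qed.

Lemma absvD_lt x y B : absv x < B -> absv y < B -> absv (x + y) < B.
Proof. by move=> hx hy; apply: le_lt_trans (absvD x y) _; rewrite gt_max hx hy. Qed.

Lemma absv_sum_le (I : Type) (s : seq I) (P : pred I) (F : I -> C) B :
  0 <= B -> (forall i, P i -> absv (F i) <= B) -> absv (\sum_(i <- s | P i) F i) <= B.
Proof.
move=> B0 hF; apply: (big_ind (fun v => absv v <= B)) => //; first by rewrite absv0.
by move=> ? ? ? ?; apply: absvD_le.
Qed.

Lemma absvD_eq x y : absv y < absv x -> absv (x + y) = absv x.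
Proof.
move=> yx; apply/eqP; rewrite eq_le absvD_le ?(ltW yx) //=.
have := absvD (x + y) (- y); rewrite addrK absvN le_max => /orP[//|xy].
by have := lt_le_trans yx xy; rewrite ltxx.
Qed.

Lemma absvXB_le x y k : absv x <= 1 -> absv y <= 1 ->
  absv (x ^+ k - y ^+ k) <= absv (x - y).
Proof.
move=> hx hy; elim: k => [|k IH]; first by rewrite subrr absv0 absv_ge0.
have -> : x ^+ k.+1 - y ^+ k.+1 = x * (x ^+ k - y ^+ k) + (x - y) * y ^+ k.
  by rewrite !exprS; ring.
apply: absvD_le; rewrite absvM.
  by rewrite -[leRHS]mul1r ler_pM ?absv_ge0.
have hyk : absv y ^+ k <= 1 by rewrite exprn_ile1 ?absv_ge0.
by rewrite absvX -[leRHS]mulr1 ler_pM ?exprn_ge0 ?absv_ge0.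
Qed.

Lemma absv_sum_powersB {n} {a : 'I_n -> C} {eps : R} {x y} :
  0 <= eps -> (forall i, absv (a i) <= eps) -> absv x <= 1 -> absv y <= 1 ->
  absv (\sum_(i < n) a i * x ^+ i - \sum_(i < n) a i * y ^+ i) <= eps * absv (x - y).
Proof.
move=> eps0 ha hx hy; rewrite -sumrB; apply: absv_sum_le => [|i _].
  by rewrite mulr_ge0 ?absv_ge0.
rewrite -mulrBr absvM; apply: ler_pM; rewrite ?absv_ge0 //.
exact: absvXB_le.
Qed.

Lemma absv_sum_powers_le {n} {a : 'I_n -> C} {eps : R} {x} :
  0 <= eps -> (forall i, absv (a i) <= eps) -> absv x <= 1 ->
  absv (\sum_(i < n) a i * x ^+ i) <= eps.
Proof.
move=> eps0 ha hx; apply: absv_sum_le => // i _.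
have hxi : absv x ^+ i <= 1 by rewrite exprn_ile1 ?absv_ge0.
by rewrite absvM absvX -[leRHS]mulr1 ler_pM ?exprn_ge0 ?absv_ge0.
Qed.

Section PowerSeries.
Context {a : nat -> C} {t : C}.
Hypothesis ha : forall k, absv (a k) <= 1.

Let S m := \sum_(j < m) a j * t ^+ j.

Lemma pseries_partial_sumB {m k} : absv t <= 1 -> (k <= m)%N ->
  absv (S m - S k) <= absv t ^+ k.
Proof.
move=> ht km; rewrite /S -!(big_mkord xpredT (fun j => a j * t ^+ j)).
rewrite (@big_cat_nat _ _ _ k 0 m) //= addrAC subrr add0r big_nat_cond.
apply: absv_sum_le; first by rewrite exprn_ge0 ?absv_ge0.
move=> j /andP[/andP[kj _] _].
rewrite absvM absvX -[leRHS]mul1r ler_pM ?exprn_ge0 ?absv_ge0 //.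
exact: ler_wiXn2l (absv_ge0 t) ht _ _ kj.
Qed.

Lemma pseries_exists : abs_complete absv -> absv t < 1 ->
  exists l, pseries_to absv a t l.
Proof.
move=> hcomplete ht; apply: (hcomplete S) => eps e0.
have [N hN] := exprn_lt_eventually (absv_ge0 t) ht e0.
have tail k : (N <= k)%N -> absv t ^+ k < eps.
  by move=> Nk; apply: (le_lt_trans _ hN); exact: ler_wiXn2l (absv_ge0 t) (ltW ht) _ _ Nk.
exists N => m k Nm Nk; case: (leqP k m) => [km|/ltnW mk].
  exact: le_lt_trans (pseries_partial_sumB (ltW ht) km) (tail _ Nk).
by rewrite absvB; exact: le_lt_trans (pseries_partial_sumB (ltW ht) mk) (tail _ Nm).
Qed.

Lemma pseries_to_unique {l1 l2} :
  pseries_to absv a t l1 -> pseries_to absv a t l2 -> l1 = l2.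
Proof.
move=> h1 h2; apply/eqP; rewrite -subr_eq0; apply/eqP/absv_eq0/eqP.
rewrite eq_le absv_ge0 andbT; apply/ler_addgt0Pr => eps e0; rewrite add0r.
have [N1 hN1] := h1 eps e0; have [N2 hN2] := h2 eps e0.
have := hN1 _ (leq_maxl N1 N2); have := hN2 _ (leq_maxr N1 N2).
set s := \sum_(_ < _) _ => h2s h1s.
have -> : l1 - l2 = (s - l2) - (s - l1) by ring.
by apply/ltW/absvD_lt; rewrite ?absvN.
Qed.

Lemma pseries_to_subl0 {l} : absv t < 1 -> pseries_to absv a t l ->
  absv (l - a 0%N) <= absv t.
Proof.
move=> ht hl; apply/ler_addgt0Pr => eps e0.
have [N hN] := hl eps e0.
have := hN _ (leq_maxl N 1); have := pseries_partial_sumB (ltW ht) (leq_maxr N 1).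
rewrite /S big_ord1 expr0 mulr1 expr1; set s := \sum_(_ < _) _ => hs1 hsl.
have -> : l - a 0%N = - (s - l) + (s - a 0%N) by ring.
apply: absvD_le; rewrite ?absvN.
  by apply: ltW; apply: lt_le_trans hsl _; rewrite lerDr absv_ge0.
by apply: le_trans hs1 _; rewrite lerDl ltW.
Qed.

End PowerSeries.

Lemma absv_prod_subl_far {r s x} : (forall z, z \in s -> r <= absv z) -> absv x < r ->
  absv (\prod_(z <- s) (x - z)) = \prod_(z <- s) absv z.
Proof.
move=> far hx; rewrite absv_prod; apply: eq_big_seq => z zs.
by rewrite absvB absvD_eq // absvN; apply: lt_le_trans hx (far _ zs).
Qed.

Lemma prod_far_gt0 {r s} : 0 < r -> (forall z, z \in s -> r <= absv z) ->
  0 < \prod_(z <- s) absv z.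
Proof.
move=> r0 far; rewrite big_seq; apply: prodr_gt0 => z zs.
exact: lt_le_trans r0 (far _ zs).
Qed.

Lemma prod_subl_far_lipschitz {r s x y} : 0 < r ->
  (forall z, z \in s -> r <= absv z) -> absv x < r -> absv y < r ->
  r * absv (\prod_(z <- s) (x - z) - \prod_(z <- s) (y - z))
    <= absv (x - y) * \prod_(z <- s) absv z.
Proof.
move=> r0; elim: s => [|z s IH] far hx hy.
  by rewrite !big_nil subrr absv0 mulr0 mulr1 absv_ge0.
have far' w : w \in s -> r <= absv w by move=> ws; apply: far; rewrite inE ws orbT.
have hz : r <= absv z by apply: far; rewrite inE eqxx.
rewrite !big_cons; set A := \prod_(_ <- _) (x - _); set B := \prod_(_ <- _) (y - _).
have -> : (x - z) * A - (y - z) * B = (x - y) * A + (y - z) * (A - B) by ring.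
have hyz : absv (y - z) = absv z by rewrite absvB absvD_eq // absvN; apply: lt_le_trans hy hz.
apply: le_trans (ler_wpM2l (ltW r0) (absvD _ _)) _.
rewrite maxr_pMr ?(ltW r0) // ge_max !absvM (absv_prod_subl_far far' hx) hyz.
have P_gt0 := prod_far_gt0 r0 far'.
apply/andP; split.
  by rewrite mulrCA ler_wpM2l ?absv_ge0 // ler_wpM2r // ltW.
by rewrite mulrCA [leRHS]mulrCA ler_wpM2l ?absv_ge0 ?IH.
Qed.

Lemma absv_X_prod_subB {r s x y} : 0 < r ->
  (forall z, z \in s -> r <= absv z) -> absv x < r -> absv y < r ->
  absv (x * \prod_(z <- s) (x - z) - y * \prod_(z <- s) (y - z))
    = absv (x - y) * \prod_(z <- s) absv z.
Proof.
move=> r0 far hx hy; have [->|xy] := eqVneq x y; first by rewrite !subrr absv0 mul0r.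
set A := \prod_(_ <- _) (x - _); set B := \prod_(_ <- _) (y - _).
have -> : x * A - y * B = (x - y) * A + y * (A - B) by ring.
rewrite [LHS]absvD_eq !absvM (absv_prod_subl_far far hx) //.
have hD := prod_subl_far_lipschitz r0 far hx hy; rewrite -/A -/B in hD.
have [D0|D0] := eqVneq (A - B) 0.
  by rewrite D0 absv0 mulr0 mulr_gt0 ?(prod_far_gt0 r0 far) // absv_gt0 subr_eq0.
by apply: (lt_le_trans _ hD); rewrite ltr_pM2r ?absv_gt0.
Qed.

Lemma absv_X_prod_perturbB {n r s} {a : 'I_n -> C} {eps : R} {x y} : 0 < r -> r <= 1 ->
  (forall z, z \in s -> r <= absv z) -> 0 <= eps -> eps < \prod_(z <- s) absv z ->
  (forall i, absv (a i) <= eps) -> absv x < r -> absv y < r ->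
  absv ((x * \prod_(z <- s) (x - z) + \sum_(i < n) a i * x ^+ i)
        - (y * \prod_(z <- s) (y - z) + \sum_(i < n) a i * y ^+ i))
    = absv (x - y) * \prod_(z <- s) absv z.
Proof.
move=> r0 r1 far eps0 epsP ha hx hy.
have [->|xy] := eqVneq x y; first by rewrite !subrr absv0 mul0r.
have dil := absv_X_prod_subB r0 far hx hy.
rewrite opprD addrACA [LHS]absvD_eq dil //.
have xy0 : 0 < absv (x - y) by rewrite absv_gt0 ?subr_eq0.
apply: le_lt_trans (absv_sum_powersB eps0 ha _ _) _.
- exact: ltW (lt_le_trans hx r1).
- exact: ltW (lt_le_trans hy r1).
by rewrite mulrC ltr_pM2l.
Qed.

Lemma f_vanishes_root {n} {c : 'I_n -> nat -> C} {t} {d : 'I_n -> C} :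
  (forall i, pseries_to absv (c i) t (d i)) ->
  forall x, f_vanishes absv c t x <-> root (monic_of d) x.
Proof.
move=> hd x; rewrite rootE horner_monic_of; split=> [[d' [hd' d'x]]|/eqP dx].
  suff -> : \sum_(i < n) d i * x ^+ i = \sum_(i < n) d' i * x ^+ i by apply/eqP.
  by apply: eq_bigr => i _; rewrite (pseries_to_unique (hd i) (hd' i)).
by exists d.
Qed.

End NonArchimedean.

Section ClosedField.
Context {R : realType} {C : closedFieldType} {absv : C -> R}.
Hypothesis hA : is_nonarch_abs absv.

Lemma absv_horner_rootless_disk {g : {poly C}} {rho : R} {x y} :
  (forall b, root g b -> rho <= absv b) -> absv x < rho -> absv y < rho ->
  absv g.[x] = absv g.[y].
Proof.
move=> far hx hy; have [bs hg] := closed_field_poly_normal g.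
have [lc0|lc0] := eqVneq (lead_coef g) 0; first by rewrite hg lc0 scale0r !horner0.
have far' b : b \in bs -> rho <= absv b.
  by move=> bs_b; apply: far; rewrite hg rootZ // root_prod_XsubC.
rewrite hg !hornerZ !horner_prod !(absvM hA).
under eq_bigr do rewrite hornerXsubC.
under [in RHS]eq_bigr do rewrite hornerXsubC.
by rewrite (absv_prod_subl_far hA far' hx) (absv_prod_subl_far hA far' hy).
Qed.

Lemma dilation_unique_root {g : {poly C}} {alpha u : C} :
  (forall x y, absv x < absv alpha -> absv y < absv alpha ->
     absv (g.[x] - g.[y]) = absv (x - y) * absv u) ->
  absv g.[0] < absv alpha * absv u ->
  exists! x, absv x < absv alpha /\ root g x.
Proof.
move=> dil g0_lt.
have alpha_u : 0 < absv alpha * absv u := le_lt_trans (absv_ge0 hA _) g0_lt.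
have u_neq0 : u != 0 by apply: contraTneq alpha_u => ->; rewrite (absv0 hA) mulr0 ltxx.
have alpha_neq0 : alpha != 0 by apply: contraTneq alpha_u => ->; rewrite (absv0 hA) mul0r ltxx.
have [u_gt0 alpha_gt0] : 0 < absv u /\ 0 < absv alpha by rewrite !(absv_gt0 hA).
have disk0 : absv (0 : C) < absv alpha by rewrite (absv0 hA).
suff [x [hx gx]] : exists x, absv x < absv alpha /\ root g x.
  exists x; split=> // y [hy gy]; apply/eqP; rewrite -subr_eq0; apply/eqP/(absv_eq0 hA).
  have /eqP := dil x y hx hy; rewrite (rootP gx) (rootP gy) subrr (absv0 hA) eq_sym.
  by rewrite mulf_eq0 (gt_eqF u_gt0) orbF => /eqP.
apply: contrapT => rootless.
have far b : root g b -> absv alpha <= absv b.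
  by move=> gb; rewrite leNgt; apply/negP => hb; apply: rootless; exists b.
have g0_gt0 : 0 < absv g.[0].
  by rewrite (absv_gt0 hA); apply/negP => /eqP g0; apply: rootless; exists 0; rewrite rootE g0.
(* |x| is the geometric mean of |alpha| and |g.[0]| / |u|, which lies strictly between them. *)
have [x x2] := closed_field_sqrt (alpha * g.[0] / u).
have hx2 : absv x ^+ 2 * absv u = absv alpha * absv g.[0].
  by rewrite -(absvX hA) -!(absvM hA) x2 mulfVK.
have hx : absv x < absv alpha.
  rewrite ltNge; apply/negP => hle.
  have : absv alpha ^+ 2 * absv u <= absv x ^+ 2 * absv u.
    by rewrite ler_wpM2r ?(ltW u_gt0) // !expr2 ler_pM ?(absv_ge0 hA).
  have : absv alpha * absv g.[0] < absv alpha ^+ 2 * absv u.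
    by rewrite expr2 -mulrA ltr_pM2l.
  lra.
have : absv x * absv u <= absv g.[0].
  have := dil x 0 hx disk0; rewrite subr0 => <-; apply: (absvD_le hA).
    by rewrite (absv_horner_rootless_disk far hx disk0).
  by rewrite (absvN hA).
have := absv_ge0 hA x; nra.
Qed.

Lemma simple_root0_factor_far (F : {poly C}) (s : seq C) (rho : R) :
  F \is monic -> mup 0 F = 1%N -> uniq s ->
  (forall x, x \in s <-> root F x /\ absv x < 1) -> 0 <= rho <= 1 ->
  (forall x, x \in s -> x != 0 -> rho <= absv x) ->
  exists l, [/\ forall x, F.[x] = x * \prod_(z <- l) (x - z),
                forall z, z \in l -> rho <= absv z &
                rho ^+ (\sum_(x <- s) mup x F) <= rho * \prod_(z <- l) absv z].
Proof.
move=> /monicP F_monic F0 s_uniq hs /andP[rho0 rho1] near.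
have [rs hrs] := closed_field_poly_normal F; rewrite F_monic scale1r in hrs.
have cnt0 : count_mem 0 rs = 1%N by rewrite -mu_prod_XsubC -hrs.
have rs0 : 0 \in rs by rewrite -has_pred1 has_count cnt0.
set l := rem 0 rs.
have hF : F = \prod_(z <- 0 :: l) ('X - z%:P) by rewrite hrs (perm_big _ (perm_to_rem rs0)).
have l0 : 0 \notin l by apply/count_memPn; rewrite count_mem_rem cnt0 eqxx.
have root_l z : z \in l -> root F z by move=> zl; rewrite hF root_prod_XsubC inE zl orbT.
have far z : z \in l -> rho <= absv z.
  move=> zl; have z0 : z != 0 by apply: contraNneq l0 => <-.
  case: (ltP (absv z) 1) => [z1|]; last exact: le_trans rho1.
  by apply: near => //; apply/hs; split=> //; apply: root_l.
exists l; split=> //.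
  move=> x; rewrite hF horner_prod big_cons hornerXsubC subr0.
  by under eq_bigr do rewrite hornerXsubC.
have -> : (\sum_(x <- s) mup x F)%N = (count (fun z => absv z < 1) l).+1.
  rewrite (eq_bigr (fun x => count_mem x (0 :: l))) => [|x _]; last first.
    by rewrite hF mu_prod_XsubC.
  have s0 : 0 \in s by apply/hs; rewrite hF root_prod_XsubC mem_head (absv0 hA) ltr01.
  rewrite sum_count_mem_uniq //= s0 add1n; congr _.+1; apply: eq_in_count => z zl /=.
  by apply/idP/idP => [/hs[]//|z1]; apply/hs; split=> //; apply: root_l.
rewrite exprS ler_wpM2l //; apply: (prod_ge_expr_count _ _ _ _ far).
by rewrite rho0 rho1.
Qed.

End ClosedField.

Theorem proposition4p7
  (p : nat) (hp : prime p)
  (R : realType) (C : closedFieldType) (absv : C -> R)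
  (hC : is_Cp p absv)
  (K : C -> Prop) (hK : finite_ext_Qp absv K)
  (n : nat) (c : 'I_n -> nat -> C)
  (hc : forall i k, in_OK absv K (c i k))
  (* x = 0 is a simple root of f(0, x) *)
  (hb : mup 0 (f_at0 c) = 1%N)
  (* s lists the distinct roots of f(0,x) in the open unit disk *)
  (s : seq C) (hs_uniq : uniq s)
  (hs : forall x, x \in s <-> (root (f_at0 c) x /\ absv x < 1))
  (* D_vert = s minus 0 is nonempty *)
  (hDvert : exists x, x \in s /\ x != 0)
  (* e = number of roots in the open unit disk, with multiplicity *)
  (e : nat) (he : e = (\sum_(x <- s) mup x (f_at0 c))%N)
  (* r = |p^{v_vert}| = min over D_vert of |x'| (v_vert = max nu) *)
  (r : R)
  (hr1 : exists x, [/\ x \in s, x != 0 & absv x = r])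
  (hr2 : forall x, x \in s -> x != 0 -> r <= absv x) :
  forall t' : C, absv t' < r ^+ e ->
    exists! x' : C, absv x' < r /\ f_vanishes absv c t' x'.
Proof.
move=> t' ht'; have [hA hcomplete _ _] := hC.
have [alpha [alpha_s alpha0 alpha_r]] := hr1; subst r.
have [_ alpha1] := (hs alpha).1 alpha_s.
have alpha_gt0 : 0 < absv alpha by rewrite (absv_gt0 hA).
have alpha01 : 0 <= absv alpha <= 1 by rewrite (ltW alpha_gt0) (ltW alpha1).
have [l [hF far P_ge]] := simple_root0_factor_far hA (f_at0 c) s (absv alpha)
  (monic_of_monic _) hb hs_uniq hs alpha01 hr2.
rewrite -he in P_ge.
have P_ge0 : 0 <= \prod_(z <- l) absv z by apply: prodr_ge0 => z _; exact: absv_ge0.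
have t'P : absv t' < \prod_(z <- l) absv z.
  exact: lt_le_trans ht' (le_trans P_ge (ler_piMl P_ge0 (ltW alpha1))).
have t'1 : absv t' < 1.
  by apply: lt_le_trans ht' _; rewrite exprn_ile1 ?(ltW alpha_gt0) ?(ltW alpha1).
have c1 i k : absv (c i k) <= 1 by case: (hc i k).
have [d hd] := fin_all_exists (fun i => pseries_exists hA (c1 i) hcomplete t'1).
have hdc i : absv (d i - c i 0%N) <= absv t' := pseries_to_subl0 hA (c1 i) t'1 (hd i).
have hg x : (monic_of d).[x]
    = x * \prod_(z <- l) (x - z) + \sum_(i < n) (d i - c i 0%N) * x ^+ i.
  by rewrite (horner_monic_ofB _ (fun i => c i 0%N)) hF.
have dil x y : absv x < absv alpha -> absv y < absv alpha ->
    absv ((monic_of d).[x] - (monic_of d).[y]) = absv (x - y) * absv (\prod_(z <- l) z).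
  move=> hx hy; rewrite !hg (absv_prod hA).
  exact: (absv_X_prod_perturbB hA alpha_gt0 (ltW alpha1) far (absv_ge0 hA t') t'P hdc hx hy).
have g0 : absv (monic_of d).[0] < absv alpha * absv (\prod_(z <- l) z).
  rewrite hg mul0r add0r (absv_prod hA); apply: le_lt_trans (lt_le_trans ht' P_ge).
  by apply: (absv_sum_powers_le hA (absv_ge0 hA t') hdc); rewrite (absv0 hA) ler01.
have [x [[hx gx] x_uniq]] := dilation_unique_root hA dil g0.
exists x; split; first by split=> //; apply/(f_vanishes_root hA hd).
by move=> y [hy /(f_vanishes_root hA hd) gy]; apply: x_uniq.
Qed.
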